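(* Let $\Gamma$ be a locally finite connected $\delta$-hyperbolic graph with base vertex $x_0$, let $n\ge0$, let $A\in\mathcal{A}_n(\Gamma)$, and let $x\in\Gamma$. Then $x\in A$ if and only if both of the following hold: (1) $x\in C(p)$ for every $p\in N(A,B_n)$; (2) $d_x$ and $d_A$ differ by a constant on $P(A,S_n)$.
   Context: $\Gamma$ is identified with its vertex set with path metric $d$; $d_x(y)=d(x,y)$. $\delta$-hyperbolic means: for every geodesic triangle with sides $[a,b],[a,c],[b,c]$ and every vertex $v\in[a,b]$ there is a vertex $w\in[a,c]\cup[b,c]$ with $d(v,w)\le\delta$. Write $\ell(x)=d(x_0,x)$, $B_n=\{\ell\le n\}$, $S_n=\{\ell=n\}$, and let $C(p)=\{y:\ell(y)=\ell(p)+d(p,y)\}$ be the cone on $p$. For finite $B$, the atom of $x$ is $\{y: d_y-d_x \text{ is constant on } B\}$; $\mathcal{A}(B)$ is the set of atoms, and $\mathcal{A}_n(\Gamma)$ is the set of infinite atoms of $\mathcal{A}(B_n)$. For an atom $A$, $d_A$ means $d_y|_{B_n}$ for any $y\in A$ (well defined up to an additive constant). For finite $B$ and $y\in\Gamma$, $N(y,B)$ is the set of $p\in B$ with $d(p,y)\le d(q,y)$ for all $q\in B$. For $\ell(y)\ge n$, a point $p\in S_n$ is proximal to $y$ if there is a geodesic $p_0,\ldots,p_n$ from $x_0$ to $p$ such that $d(y_i,p_i)\le4\delta+2$ for all $i\le n$ and every geodesic $y_0=x_0,y_1,\ldots,y_{\ell(y)}=y$ from $x_0$ to $y$; $P(y,S_n)$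 is the set of such points. The sets $N(y,B_n)$ and $P(y,S_n)$ are the same for all $y\in A$, and are denoted $N(A,B_n)$ and $P(A,S_n)$. *)

From Stdlib Require Import Reals ZArith List.
Open Scope R_scope.

Section Graphs.
Context {V : Type}.

Definition walk (adj : V -> V -> Prop) (g : nat -> V) (k : nat) (a b : V) : Prop :=
  g 0%nat = a /\ g k = b /\ (forall i, (i < k)%nat -> adj (g i) (g (S i))).

Definition graph_symmetric (adj : V -> V -> Prop) := forall x y, adj x y -> adj y x.
Definition graph_irreflexive (adj : V -> V -> Prop) := forall x, ~ adj x x.

Definition locally_finite (adj : V -> V -> Prop) : Prop :=
  forall x, exists l : list V, forall y, adj x y -> In y l.

Definition connected (adj : V -> V -> Prop) : Prop :=
  forall a b, exists g k, walk adj g k a b.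

Definition path_metric (adj : V -> V -> Prop) (d : V -> V -> nat) : Prop :=
  forall a b m, (d a b <= m)%nat <-> exists g k, (k <= m)%nat /\ walk adj g k a b.

Definition geodesic (adj : V -> V -> Prop) (d : V -> V -> nat)
  (g : nat -> V) (k : nat) (a b : V) : Prop :=
  walk adj g k a b /\ k = d a b.

Definition hyperbolic (adj : V -> V -> Prop) (d : V -> V -> nat) (delta : R) : Prop :=
  forall a b c gab kab gac kac gbc kbc,
    geodesic adj d gab kab a b -> geodesic adj d gac kac a c ->
    geodesic adj d gbc kbc b c ->
    forall i, (i <= kab)%nat ->
      exists j, ((j <= kac)%nat /\ INR (d (gab i) (gac j)) <= delta)
             \/ ((j <= kbc)%nat /\ INR (d (gab i) (gbc j)) <= delta).

Definition ball (d : V -> V -> nat) (x0 : V) (n : nat) : V -> Prop :=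
  fun b => (d x0 b <= n)%nat.
Definition sphere (d : V -> V -> nat) (x0 : V) (n : nat) : V -> Prop :=
  fun b => d x0 b = n.

Definition cone (d : V -> V -> nat) (x0 p : V) : V -> Prop :=
  fun y => d x0 y = (d x0 p + d p y)%nat.

Definition atom (d : V -> V -> nat) (B : V -> Prop) (x : V) : V -> Prop :=
  fun y => exists c : Z, forall b, B b -> (Z.of_nat (d y b) - Z.of_nat (d x b))%Z = c.

Definition finite_set (A : V -> Prop) : Prop :=
  exists l : list V, forall y, A y -> In y l.

Definition infinite_atom (d : V -> V -> nat) (x0 : V) (n : nat) (A : V -> Prop) : Prop :=
  (exists z, forall y, A y <-> atom d (ball d x0 n) z y) /\ ~ finite_set A.

Definition nearest (d : V -> V -> nat) (B : V -> Prop) (y : V) : V -> Prop :=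
  fun p => B p /\ forall q, B q -> (d p y <= d q y)%nat.

Definition proximal (adj : V -> V -> Prop) (d : V -> V -> nat) (delta : R)
  (x0 : V) (n : nat) (y : V) : V -> Prop :=
  fun p => sphere d x0 n p /\
    exists gp, geodesic adj d gp n x0 p /\
      forall gy, geodesic adj d gy (d x0 y) x0 y ->
        forall i, (i <= n)%nat -> INR (d (gy i) (gp i)) <= 4 * delta + 2.

End Graphs.

From Stdlib Require Import Reals ZArith List Lia Lra Classical.
Open Scope nat_scope.

(* Fix y in A with l(y) >= n.  Condition (1) says that every geodesic from x0
   to y, cut at level n, extends to a geodesic from x0 to x.  Every point q of
   S_n is then reached from x (and from y) by a geodesic whose first point on
   S_n is some p; thinness of the triangle x0, p, x keeps the geodesic from x0
   to p within 4 delta + 2 of the common prefix, so p is proximal to y.  Hence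
   d_x - d_y, constant on P(A,S_n) by (2), is squeezed to the same constant on
   S_n, and then on B_n, since every geodesic from x or y into B_n crosses S_n. *)

Lemma nat_least_witness (P : nat -> Prop) N :
  P N -> exists t, P t /\ forall s, s < t -> ~ P s.
Proof.
  induction N as [N IH] using (well_founded_induction lt_wf). intros HN.
  destruct (classic (exists s, s < N /\ P s)) as [[s [Hs Ps]]|Hno].
  - exact (IH s Hs Ps).
  - exists N. split; auto. intros s Hs Ps. apply Hno. eauto.
Qed.

Lemma nat_greatest_below (P : nat -> Prop) n :
  P 0 -> exists m, m <= n /\ P m /\ forall j, m < j -> j <= n -> ~ P j.
Proof.
  intros H0. induction n as [|n [m [Hm [Pm Hmax]]]].
  - exists 0. split; [lia|split; auto]. intros; lia.
  - destruct (classic (P (S n))).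
    + exists (S n). split; [lia|split; auto]. intros; lia.
    + exists m. split; [lia|split; auto]. intros j Hj1 Hj2.
      destruct (Nat.eq_dec j (S n)); [now subst|]. apply Hmax; lia.
Qed.

Lemma nat_floor_exists (r : R) :
  (0 <= r)%R -> exists D : nat, (INR D <= r)%R /\ forall k, (INR k <= r)%R -> k <= D.
Proof.
  intros Hr. destruct (base_Int_part r) as [B1 B2].
  assert (Hz : (0 <= Int_part r)%Z)
    by (apply Z.lt_succ_r, lt_IZR; rewrite succ_IZR; simpl; lra).
  assert (HI : INR (Z.to_nat (Int_part r)) = IZR (Int_part r))
    by (rewrite INR_IZR_INZ, Z2Nat.id; auto).
  exists (Z.to_nat (Int_part r)). split; [now rewrite HI|].
  intros k Hk. assert (Hlt : (INR k < INR (S (Z.to_nat (Int_part r))))%R)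
    by (rewrite S_INR, HI; lra).
  apply INR_lt in Hlt. lia.
Qed.

Section PathMetric.
Context {V : Type} {adj : V -> V -> Prop} {d : V -> V -> nat}.
Hypothesis metric : path_metric adj d.

Lemma walk_length_ge_dist g k a b : walk adj g k a b -> d a b <= k.
Proof. intros Hw. apply (proj2 (metric a b k)). exists g, k. auto. Qed.

Lemma geodesic_exists a b : exists g, geodesic adj d g (d a b) a b.
Proof.
  destruct (proj1 (metric a b (d a b)) (le_n _)) as [g [k [Hk Hw]]].
  pose proof (walk_length_ge_dist g k a b Hw).
  exists g. split; [replace (d a b) with k by lia; exact Hw | reflexivity].
Qed.

Lemma dist_self a : d a a = 0.
Proof.
  enough (d a a <= 0) by lia.
  apply (walk_length_ge_dist (fun _ => a)). repeat split. intros; lia.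
Qed.

Lemma hyperbolic_delta_nonneg (delta : R) (x0 : V) :
  hyperbolic adj d delta -> (0 <= delta)%R.
Proof.
  intros hyp.
  assert (G : geodesic adj d (fun _ => x0) 0 x0 x0)
    by (repeat split; [intros; lia | now rewrite dist_self]).
  destruct (hyp x0 x0 x0 _ _ _ _ _ _ G G G 0 (le_n 0)) as [j [[_ Hj]|[_ Hj]]];
    rewrite dist_self in Hj; exact Hj.
Qed.

Lemma dist_eq0 a b : d a b = 0 -> a = b.
Proof.
  intros H. destruct (geodesic_exists a b) as [g [[H0 [H1 _]] _]].
  rewrite H in H1. congruence.
Qed.

Lemma walk_app g1 k1 a b g2 k2 c :
  walk adj g1 k1 a b -> walk adj g2 k2 b c ->
  walk adj (fun i => if i <=? k1 then g1 i else g2 (i - k1)) (k1 + k2) a c.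
Proof.
  intros [A0 [A1 A2]] [B0 [B1 B2]]. split; [|split].
  - exact A0.
  - destruct (Nat.leb_spec (k1 + k2) k1).
    + replace k2 with 0 in * by lia. rewrite Nat.add_0_r. congruence.
    + replace (k1 + k2 - k1) with k2 by lia. exact B1.
  - intros i Hi. destruct (Nat.leb_spec i k1), (Nat.leb_spec (S i) k1).
    + apply A2. lia.
    + replace i with k1 by lia. replace (S k1 - k1) with 1 by lia.
      rewrite A1, <- B0. apply B2. lia.
    + lia.
    + replace (S i - k1) with (S (i - k1)) by lia. apply B2. lia.
Qed.

Lemma dist_triangle a b c : d a c <= d a b + d b c.
Proof.
  destruct (geodesic_exists a b) as [g1 [H1 _]], (geodesic_exists b c) as [g2 [H2 _]].
  exact (walk_length_ge_dist _ _ _ _ (walk_app _ _ _ _ _ _ _ H1 H2)).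
Qed.

Lemma dist_adj a b : adj a b -> d a b <= 1.
Proof.
  intros H. apply (walk_length_ge_dist (fun i => if i =? 0 then a else b)).
  repeat split. intros i Hi. replace i with 0 by lia. exact H.
Qed.

Lemma walk_segment g k a b i j :
  walk adj g k a b -> i <= j -> j <= k ->
  walk adj (fun s => g (i + s)) (j - i) (g i) (g j).
Proof.
  intros [_ [_ W]] Hij Hjk. split; [|split].
  - now rewrite Nat.add_0_r.
  - f_equal. lia.
  - intros s Hs. replace (i + S s) with (S (i + s)) by lia. apply W. lia.
Qed.

Lemma geodesic_dist g k a b i j :
  geodesic adj d g k a b -> i <= j -> j <= k -> d (g i) (g j) = j - i.
Proof.
  intros [Hw Hk] Hij Hjk.
  pose proof (walk_length_ge_dist _ _ _ _ (walk_segment g k a b i j Hw Hij Hjk)).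
  pose proof (walk_length_ge_dist _ _ _ _ (walk_segment g k a b 0 i Hw (Nat.le_0_l i) ltac:(lia))).
  pose proof (walk_length_ge_dist _ _ _ _ (walk_segment g k a b j k Hw Hjk (le_n k))).
  destruct Hw as [W0 [W1 _]]. rewrite W0, W1 in *.
  pose proof (dist_triangle a (g i) b). pose proof (dist_triangle (g i) (g j) b). lia.
Qed.

Lemma geodesic_dist_start g k a b i :
  geodesic adj d g k a b -> i <= k -> d a (g i) = i.
Proof.
  intros Hg Hi. pose proof (geodesic_dist g k a b 0 i Hg (Nat.le_0_l i) Hi).
  destruct Hg as [[H0 _] _]. rewrite H0 in *. lia.
Qed.

Lemma geodesic_split g k a b i :
  geodesic adj d g k a b -> i <= k -> d a b = d a (g i) + d (g i) b.
Proof.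
  intros Hg Hi. rewrite (geodesic_dist_start g k a b i Hg Hi).
  pose proof (geodesic_dist g k a b i k Hg Hi (le_n k)).
  destruct Hg as [[_ [H1 _]] Hk]. rewrite H1 in *. lia.
Qed.

Lemma geodesic_prefix g k a b j :
  geodesic adj d g k a b -> j <= k -> geodesic adj d g j a (g j).
Proof.
  intros Hg Hj. pose proof (geodesic_dist_start g k a b j Hg Hj).
  destruct Hg as [[H0 [_ W]] _]. repeat split; auto. intros i Hi. apply W. lia.
Qed.

Section Symmetric.
Hypothesis sym : graph_symmetric adj.

Lemma walk_rev g k a b : walk adj g k a b -> walk adj (fun i => g (k - i)) k b a.
Proof.
  intros [H0 [H1 W]]. split; [|split].
  - now rewrite Nat.sub_0_r.
  - now rewrite Nat.sub_diag.
  - intros i Hi. apply sym. replace (k - i) with (S (k - S i)) by lia. apply W. lia.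
Qed.

Lemma dist_sym a b : d a b = d b a.
Proof.
  assert (H : forall a b, d b a <= d a b).
  { intros u v. destruct (geodesic_exists u v) as [g [Hg _]].
    exact (walk_length_ge_dist _ _ _ _ (walk_rev _ _ _ _ Hg)). }
  pose proof (H a b). pose proof (H b a). lia.
Qed.

Lemma geodesic_rev g k a b :
  geodesic adj d g k a b -> geodesic adj d (fun i => g (k - i)) k b a.
Proof. intros [Hw Hk]. split; [now apply walk_rev | now rewrite dist_sym]. Qed.

Lemma geodesic_dist_le g k a b i j :
  geodesic adj d g k a b -> i <= k -> j <= k -> d (g i) (g j) <= (i - j) + (j - i).
Proof.
  intros Hg Hi Hj. destruct (Nat.le_ge_cases i j).
  - rewrite (geodesic_dist g k a b i j Hg); lia.
  - rewrite dist_sym, (geodesic_dist g k a b j i Hg); lia.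
Qed.

Lemma level_lipschitz x0 u v : d x0 u <= d x0 v + d u v.
Proof. rewrite (dist_sym u v). apply dist_triangle. Qed.

Lemma first_crossing x0 n g k z w :
  walk adj g k z w -> n <= d x0 z -> d x0 w <= n ->
  exists t, t <= k /\ d x0 (g t) = n /\ forall s, s <= t -> n <= d x0 (g s).
Proof.
  intros [W0 [W1 W]] Hz Hw.
  destruct (nat_least_witness (fun s => d x0 (g s) <= n) k ltac:(cbv beta; now rewrite W1))
    as [t [Pt Ht]].
  assert (Htk : t <= k).
  { destruct (Nat.le_gt_cases t k) as [|Hkt]; auto.
    exfalso. apply (Ht k Hkt). now rewrite W1. }
  assert (Hbefore : forall s, s < t -> n < d x0 (g s)).
  { intros s Hs. specialize (Ht s Hs). lia. }
  assert (Hn : n <= d x0 (g t)).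
  { destruct t as [|t]; [now rewrite W0|].
    pose proof (Hbefore t (Nat.lt_succ_diag_r t)).
    pose proof (dist_adj _ _ (W t ltac:(lia))).
    pose proof (level_lipschitz x0 (g t) (g (S t))). lia. }
  exists t. repeat split; auto; [lia|].
  intros s Hs. destruct (Nat.eq_dec s t); [subst; lia|].
  pose proof (Hbefore s ltac:(lia)). lia.
Qed.

End Symmetric.

Lemma ball_finite (lf : locally_finite adj) x0 n : exists l, forall y, d x0 y <= n -> In y l.
Proof.
  induction n as [|n [l Hl]].
  - exists (x0 :: nil). intros y Hy. left. apply dist_eq0. lia.
  - assert (Hnb : exists L, forall u v, In u l -> adj u v -> In v L).
    { clear Hl. induction l as [|a l [L HL]].
      - exists nil. intros u v [].
      - destruct (lf a) as [La HLa]. exists (La ++ L).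
        intros u v [<-|Hu] Huv; apply in_or_app; eauto. }
    destruct Hnb as [L HL]. exists (l ++ L). intros y Hy. apply in_or_app.
    destruct (le_dec (d x0 y) n); [left; auto|right].
    destruct (geodesic_exists x0 y) as [g Gg].
    pose proof (geodesic_dist_start g _ _ _ n Gg ltac:(lia)).
    destruct Gg as [[_ [G1 W]] _].
    apply (HL (g n)); [apply Hl; lia|].
    replace (d x0 y) with (S n) in G1 by lia. rewrite <- G1. apply W. lia.
Qed.

Lemma infinite_set_far_point (lf : locally_finite adj) x0 n (A : V -> Prop) :
  ~ finite_set A -> exists y, A y /\ n <= d x0 y.
Proof.
  intros Hinf. apply NNPP. intros Hno. apply Hinf.
  destruct (ball_finite lf x0 n) as [l Hl]. exists l. intros y Ay. apply Hl.
  destruct (le_lt_dec n (d x0 y)); [exfalso; eauto|lia].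
Qed.

End PathMetric.

Section Hyperbolic.
Context {V : Type} {adj : V -> V -> Prop} {d : V -> V -> nat} {delta : R} {D : nat}.
Hypotheses (metric : path_metric adj d) (sym : graph_symmetric adj)
  (hyp : hyperbolic adj d delta) (D_max : forall k, (INR k <= delta)%R -> k <= D).

Lemma thin_triangle_nat a b c gab kab gac kac gbc kbc :
  geodesic adj d gab kab a b -> geodesic adj d gac kac a c ->
  geodesic adj d gbc kbc b c ->
  forall i, i <= kab ->
    exists j, (j <= kac /\ d (gab i) (gac j) <= D) \/ (j <= kbc /\ d (gab i) (gbc j) <= D).
Proof.
  intros G1 G2 G3 i Hi.
  destruct (hyp a b c gab kab gac kac gbc kbc G1 G2 G3 i Hi) as [j [[? ?]|[? ?]]];
    exists j; auto.
Qed.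

Lemma fellow_travel x0 a b g1 k1 g2 k2 i :
  geodesic adj d g1 k1 x0 a -> geodesic adj d g2 k2 x0 b -> i <= k1 -> i <= k2 ->
  d (g1 i) (g2 i) <= 2 * D + 2 * d a b.
Proof.
  intros G1 G2 Hi1 Hi2.
  destruct (geodesic_exists metric a b) as [s Gs].
  pose proof (geodesic_dist_start metric g1 k1 x0 a i G1 Hi1).
  destruct (thin_triangle_nat _ _ _ _ _ _ _ _ _ G1 G2 Gs i Hi1) as [j [[Hj Hd]|[Hj Hd]]].
  - pose proof (geodesic_dist_start metric g2 k2 x0 b j G2 Hj).
    pose proof (level_lipschitz metric sym x0 (g1 i) (g2 j)).
    pose proof (level_lipschitz metric sym x0 (g2 j) (g1 i)).
    pose proof (dist_sym metric sym (g2 j) (g1 i)).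
    pose proof (dist_triangle metric (g1 i) (g2 j) (g2 i)).
    pose proof (geodesic_dist_le metric sym g2 k2 x0 b j i G2 Hj Hi2). lia.
  - pose proof (geodesic_split metric s (d a b) a b j Gs Hj).
    pose proof (geodesic_split metric g2 k2 x0 b i G2 Hi2).
    pose proof (geodesic_dist_start metric g2 k2 x0 b i G2 Hi2).
    destruct G2 as [[_ [T1 _]] _].
    pose proof (dist_triangle metric x0 (s j) b).
    pose proof (level_lipschitz metric sym x0 (s j) (g1 i)).
    pose proof (dist_sym metric sym (s j) (g1 i)).
    pose proof (dist_sym metric sym b (g2 i)).
    pose proof (dist_triangle metric (g1 i) (s j) (g2 i)).
    pose proof (dist_triangle metric (s j) b (g2 i)). lia.
Qed.

Lemma sphere_fellow_travel x0 n g k z w be m gp :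
  geodesic adj d g k z w -> (forall s, s <= k -> n <= d x0 (g s)) ->
  geodesic adj d be m x0 z -> geodesic adj d gp n x0 w ->
  forall i, i <= n -> d (be i) (gp i) <= 4 * D + 2.
Proof.
  intros Gg Hout Gb Gp.
  pose proof (geodesic_rev metric sym g k z w Gg) as Gr.
  assert (Hnm : n <= m).
  { pose proof (Hout 0 (Nat.le_0_l k)).
    destruct Gb as [_ Bm], Gg as [[G0 _] _]. rewrite G0 in *. lia. }
  destruct (nat_greatest_below (fun j => exists j', j' <= m /\ d (gp j) (be j') <= D) n)
    as [js [Hjs [[j' [Hj' Hd]] Hmax]]].
  { exists 0. split; [lia|].
    destruct Gb as [[B0 _] _], Gp as [[P0 _] _]. rewrite B0, P0, (dist_self metric). lia. }
  (* Past [js], thinness of the triangle x0, w, z puts [gp] within D of [g],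
     whose levels are at least n; so [gp] cannot go on for more than D + 1 steps. *)
  assert (Hjn : n <= js + 1 + D).
  { destruct (Nat.eq_dec js n); [lia|].
    destruct (thin_triangle_nat _ _ _ _ _ _ _ _ _ Gp Gb Gr (S js) ltac:(lia))
      as [j [[Hj Hdj]|[Hj Hdj]]].
    - exfalso. apply (Hmax (S js)); [lia|lia|eauto].
    - pose proof (Hout (k - j) ltac:(lia)).
      pose proof (geodesic_dist_start metric gp n x0 w (S js) Gp ltac:(lia)).
      pose proof (level_lipschitz metric sym x0 (g (k - j)) (gp (S js))).
      pose proof (dist_sym metric sym (g (k - j)) (gp (S js))). lia. }
  pose proof (geodesic_dist_start metric gp n x0 w js Gp Hjs).
  pose proof (geodesic_dist_start metric be m x0 z j' Gb Hj').
  pose proof (level_lipschitz metric sym x0 (gp js) (be j')).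
  pose proof (level_lipschitz metric sym x0 (be j') (gp js)).
  pose proof (dist_sym metric sym (be j') (gp js)).
  intros i Hi. destruct (le_dec i js), (le_dec i j').
  { pose proof (fellow_travel x0 _ _ be j' gp js i
      (geodesic_prefix metric be m x0 z j' Gb Hj')
      (geodesic_prefix metric gp n x0 w js Gp Hjs) ltac:(lia) ltac:(lia)). lia. }
  all: pose proof (dist_triangle metric (be i) (be j') (gp i));
    pose proof (dist_triangle metric (be j') (gp js) (gp i));
    pose proof (geodesic_dist_le metric sym be m x0 z i j' Gb ltac:(lia) Hj');
    pose proof (geodesic_dist_le metric sym gp n x0 w js i Gp Hjs Hi); lia.
Qed.

End Hyperbolic.

Section AtomTransitivity.
Context {V : Type} (d : V -> V -> nat) (B : V -> Prop).

Lemma atom_sym x y : atom d B x y -> atom d B y x.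
Proof. intros [c Hc]. exists (- c)%Z. intros b Hb. specialize (Hc b Hb). lia. Qed.

Lemma atom_trans x y w : atom d B x y -> atom d B y w -> atom d B x w.
Proof.
  intros [c1 H1] [c2 H2]. exists (c1 + c2)%Z. intros b Hb.
  specialize (H1 b Hb). specialize (H2 b Hb). lia.
Qed.

End AtomTransitivity.

Section Atoms.
Context {V : Type} {adj : V -> V -> Prop} {d : V -> V -> nat} {delta : R} {D : nat}.
Hypotheses (metric : path_metric adj d) (sym : graph_symmetric adj)
  (hyp : hyperbolic adj d delta)
  (D_le : (INR D <= delta)%R) (D_max : forall k, (INR k <= delta)%R -> k <= D).
Variables (x0 : V) (n : nat).

Lemma nearest_cone y p : nearest d (ball d x0 n) y p -> cone d x0 p y.
Proof.
  intros [Hp Hnear]. unfold ball, cone in *.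
  pose proof (dist_triangle metric x0 p y).
  destruct (le_lt_dec n (d x0 y)) as [Hy|Hy].
  - destruct (geodesic_exists metric x0 y) as [g Gg].
    pose proof (geodesic_split metric g _ _ _ n Gg Hy).
    pose proof (geodesic_dist_start metric g _ _ _ n Gg Hy).
    pose proof (Hnear (g n) ltac:(lia)). lia.
  - pose proof (Hnear y ltac:(lia)). rewrite (dist_self metric) in *.
    assert (p = y) as -> by (apply (dist_eq0 metric); lia).
    rewrite (dist_self metric). lia.
Qed.

Lemma geodesic_cut_nearest y al :
  n <= d x0 y -> geodesic adj d al (d x0 y) x0 y -> nearest d (ball d x0 n) y (al n).
Proof.
  intros Hy Gal. unfold ball.
  pose proof (geodesic_split metric al _ _ _ n Gal Hy).
  pose proof (geodesic_dist_start metric al _ _ _ n Gal Hy).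
  split; [lia|]. intros q Hq. pose proof (dist_triangle metric x0 q y). lia.
Qed.

Lemma atom_cone y x p :
  atom d (ball d x0 n) y x -> nearest d (ball d x0 n) y p -> cone d x0 p x.
Proof.
  intros [c Hc] Hp. pose proof (nearest_cone y p Hp) as Hy.
  destruct Hp as [Hbp _]. unfold cone in *.
  assert (Hb0 : ball d x0 n x0) by (unfold ball; rewrite (dist_self metric); lia).
  pose proof (Hc x0 Hb0). pose proof (Hc p Hbp).
  rewrite (dist_sym metric sym x x0), (dist_sym metric sym y x0),
    (dist_sym metric sym y p), (dist_sym metric sym x p) in *. lia.
Qed.

Definition prefix_extends (y z : V) : Prop :=
  forall al, geodesic adj d al (d x0 y) x0 y ->
    exists be, geodesic adj d be (d x0 z) x0 z /\ forall i, i <= n -> be i = al i.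

Lemma prefix_extends_refl y : prefix_extends y y.
Proof. intros al Gal. exists al. auto. Qed.

Lemma prefix_extends_of_cone y x :
  n <= d x0 y -> (forall p, nearest d (ball d x0 n) y p -> cone d x0 p x) ->
  prefix_extends y x.
Proof.
  intros Hy Hcone al Gal.
  pose proof (Hcone (al n) (geodesic_cut_nearest y al Hy Gal)) as Hx. unfold cone in Hx.
  rewrite (geodesic_dist_start metric al _ _ _ n Gal Hy) in Hx.
  destruct (geodesic_exists metric (al n) x) as [h [Wh _]].
  destruct (geodesic_prefix metric al _ _ _ n Gal Hy) as [Wal _].
  exists (fun i => if i <=? n then al i else h (i - n)). split.
  - split; [rewrite Hx; exact (walk_app _ _ _ _ _ _ _ Wal Wh) | reflexivity].
  - intros i Hi. destruct (Nat.leb_spec i n); [reflexivity|lia].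
Qed.

Lemma ball_gate z b :
  n <= d x0 z -> ball d x0 n b -> exists q, sphere d x0 n q /\ d z b = d z q + d q b.
Proof.
  intros Hz Hb. destruct (geodesic_exists metric z b) as [g Gg].
  destruct (first_crossing metric sym x0 n g _ z b (proj1 Gg) Hz Hb) as [t [Ht [Hq _]]].
  exists (g t). split; [exact Hq|]. exact (geodesic_split metric g _ _ _ t Gg Ht).
Qed.

Lemma sphere_gate y z q :
  n <= d x0 z -> prefix_extends y z -> sphere d x0 n q ->
  exists p, proximal adj d delta x0 n y p /\ d z q = d z p + d p q.
Proof.
  intros Hz Hext Hq. destruct (geodesic_exists metric z q) as [g Gg].
  destruct (first_crossing metric sym x0 n g _ z q (proj1 Gg) Hz ltac:(unfold sphere in Hq; lia))
    as [t [Ht [Hpt Hout]]].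
  exists (g t). split; [|exact (geodesic_split metric g _ _ _ t Gg Ht)].
  split; [exact Hpt|].
  destruct (geodesic_exists metric x0 (g t)) as [gp Gp]. rewrite Hpt in Gp.
  exists gp. split; [exact Gp|]. intros gy Gy i Hi.
  destruct (Hext gy Gy) as [be [Gbe Hbe]]. rewrite <- (Hbe i Hi).
  pose proof (sphere_fellow_travel metric sym hyp D_max x0 n g t z (g t) be _ gp
    (geodesic_prefix metric g _ _ _ t Gg Ht) Hout Gbe Gp i Hi) as Hd.
  apply le_INR in Hd. rewrite plus_INR, mult_INR in Hd. simpl in Hd. lra.
Qed.

Lemma gate_difference (P : V -> Prop) x y q c :
  (forall p, P p -> (Z.of_nat (d x p) - Z.of_nat (d y p))%Z = c) ->
  (exists p, P p /\ d x q = d x p + d p q) ->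
  (exists p, P p /\ d y q = d y p + d p q) ->
  (Z.of_nat (d x q) - Z.of_nat (d y q))%Z = c.
Proof.
  intros Hc [px [Px Ex]] [py [Py Ey]].
  pose proof (Hc px Px). pose proof (Hc py Py).
  pose proof (dist_triangle metric x py q). pose proof (dist_triangle metric y px q). lia.
Qed.

Lemma atom_of_gates y x c :
  n <= d x0 y ->
  (forall p, nearest d (ball d x0 n) y p -> cone d x0 p x) ->
  (forall p, proximal adj d delta x0 n y p -> (Z.of_nat (d x p) - Z.of_nat (d y p))%Z = c) ->
  atom d (ball d x0 n) y x.
Proof.
  intros Hy Hcone Hprox.
  assert (Hx : n <= d x0 x).
  { destruct (geodesic_exists metric x0 y) as [al Gal].
    pose proof (Hcone _ (geodesic_cut_nearest y al Hy Gal)) as Hc. unfold cone in Hc.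
    rewrite (geodesic_dist_start metric al _ _ _ n Gal Hy) in Hc. lia. }
  pose proof (prefix_extends_of_cone y x Hy Hcone) as Hext.
  assert (Hsphere : forall q, sphere d x0 n q ->
            (Z.of_nat (d x q) - Z.of_nat (d y q))%Z = c).
  { intros q Hq. apply (gate_difference _ x y q c Hprox).
    - exact (sphere_gate y x q Hx Hext Hq).
    - exact (sphere_gate y y q Hy (prefix_extends_refl y) Hq). }
  exists c. intros b Hb. apply (gate_difference _ x y b c Hsphere).
  - exact (ball_gate x b Hx Hb).
  - exact (ball_gate y b Hy Hb).
Qed.

End Atoms.

Open Scope R_scope.

Theorem mainTheorem17 (V : Type) (adj : V -> V -> Prop) (d : V -> V -> nat)
  (delta : R) (x0 : V) (n : nat) (A : V -> Prop) (x : V) :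
  graph_symmetric adj -> graph_irreflexive adj ->
  locally_finite adj -> connected adj -> path_metric adj d ->
  hyperbolic adj d delta ->
  infinite_atom d x0 n A ->
  (A x <->
    ((forall y, A y -> forall p, nearest d (ball d x0 n) y p -> cone d x0 p x) /\
     (forall y, A y -> exists c : Z,
        forall p, proximal adj d delta x0 n y p ->
          (Z.of_nat (d x p) - Z.of_nat (d y p))%Z = c))).
Proof.
  intros sym _ lf _ metric hyp [[z0 HA] Hinf].
  assert (Hatom : forall u v, A u -> A v -> atom d (ball d x0 n) u v)
    by (intros u v Au Av; exact (atom_trans _ _ _ _ _ (atom_sym _ _ _ _ (proj1 (HA u) Au))
                                            (proj1 (HA v) Av))).
  split.
  - intros Ax. split.
    + intros y Ay p Hp. exact (atom_cone metric sym x0 n y x p (Hatom y x Ay Ax) Hp).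
    + intros y Ay. destruct (Hatom y x Ay Ax) as [c Hc]. exists c.
      intros p [Hp _]. apply Hc. unfold ball, sphere in *. lia.
  - intros [Hcone Hprox].
    destruct (infinite_set_far_point metric lf x0 n A Hinf) as [y [Ay Hy]].
    destruct (Hprox y Ay) as [c Hc].
    destruct (nat_floor_exists delta (hyperbolic_delta_nonneg metric delta x0 hyp))
      as [D [D_le D_max]].
    apply HA. apply (atom_trans _ _ _ _ _ (proj1 (HA y) Ay)).
    exact (atom_of_gates metric sym hyp D_le D_max x0 n y x c Hy (Hcone y Ay) Hc).
Qed.
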